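(* Let $f:\mathbb R\to\mathbb R$ be monotonically increasing with $f(0)=0$. Let $\vec X^m\in\underline V^h_{\partial_0}$ satisfy assumption $(\mathfrak A)$, let $\Delta t_m>0$, and let $(\delta\vec X^{m+1},\kappa^{m+1})\in\underline V^h_\partial\times W^h_{\partial_0}$ satisfy, with $\vec X^{m+1}=\vec X^m+\delta\vec X^{m+1}$, $$\Big(\vec X^m\cdot\vec e_1\,\tfrac{\vec X^{m+1}-\vec X^m}{\Delta t_m},\chi\,\vec\nu^m|\vec X^m_\rho|\Big)^h=\Big(\vec X^m\cdot\vec e_1\,\pi^h[f(\kappa^{m+1})],\chi|\vec X^m_\rho|\Big)^h\quad\forall\chi\in W^h_{\partial_0},$$ $$\Big(\vec X^m\cdot\vec e_1\,\kappa^{m+1}\vec\nu^m,\vec\eta\,|\vec X^m_\rho|\Big)^h+\big(\vec\eta\cdot\vec e_1,|\vec X^{m+1}_\rho|\big)+\Big((\vec X^m\cdot\vec e_1)\vec X^{m+1}_\rho,\vec\eta_\rho|\vec X^m_\rho|^{-1}\Big)=B^m(\vec\eta)\quad\forall\vec\eta\in\underline V^h_\partial.$$ Then $E(\vec X^{m+1})+2\pi\Delta t_m\big(\vec X^m\cdot\vec e_1\,f(\kappa^{m+1}),\kappa^{m+1}|\vec X^m_\rho|\big)^h\le E(\vec X^m)$, and in particular $E(\vec X^{m+1})\le E(\vec X^m)$.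
   Context: Setup. $\vec e_1=(1,0)^T$, $\vec e_2=(0,1)^T$; ''$\cdot$'' is the Euclidean inner product; $[r]_+=\max\{r,0\}$, $[r]_-=-\max\{-r,0\}$. $I$ is either the periodic interval $\mathbb R/\mathbb Z$ (with $\partial I=\emptyset$) or $I=(0,1)$ (with $\partial I=\{0,1\}$). $\partial I=\partial_DI\cup\partial_0I\cup\partial_1I\cup\partial_2I$ is a given disjoint partition, and $\widehat\varrho^{(p)}\in\mathbb R$, $p\in\{0,1\}$, are given constants with $|\widehat\varrho^{(p)}|\le1$. Let $J\ge3$, $h=1/J$, $q_j=jh$ ($j=0,\dots,J$; $q_0=q_J$ identified in the periodic case). $V^h$ is the space of continuous functions on $\overline I$ (periodic if $I=\mathbb R/\mathbb Z$) that are affine on each $[q_{j-1},q_j]$, and $\pi^h$ is the nodal interpolation onto $V^h$; $\underline V^h=[V^h]^2$; $\underline V^h_{\partial_0}=\{\vec\eta\in\underline V^h:\vec\eta(\rho)\cdot\vec e_1=0\ \forall\rho\in\partial_0I\}$; $\underline V^h_\partial=\{\vec\eta\in\underline V^h_{\partial_0}:\vec\eta(\rho)\cdot\vec e_i=0\ \forall\rho\in\partial_iI,\ i=1,2;\ \vec\eta(\rho)=\vec0\ \forall\rho\in\partial_DI\}$; $W^h_{\partial_0}=\{\chi\in V^h:\chi(\rho)=0\ \forall\rho\in\partial_0I\}$. $(\cdot,\cdot)$ is the $L^2(I)$ inner product, and for piecewise continuous $f,g$ the mass-lumped product is $(f,g)^h=\tfrac h2\sum_{j=1}^J[(fg)(q_j^-)+(fg)(q_{j-1}^+)]$.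 $\vec\nu^m=-[\vec X^m_\rho]^\perp/|\vec X^m_\rho|$ with $(a,b)^\perp=(b,-a)$. Assumption $(\mathfrak A)$: $|\vec X^m_\rho|>0$ a.e. on $I$ and $\vec X^m(\rho)\cdot\vec e_1>0$ for all $\rho\in\overline I\setminus\partial_0I$. $B^m(\vec\eta)=-\sum_{p\in\partial_1I}\widehat\varrho^{(p)}(\vec X^m(p)\cdot\vec e_1)\vec\eta(p)\cdot\vec e_2-\sum_{p\in\partial_2I}\big(([\widehat\varrho^{(p)}]_+\vec X^{m+1}(p)+[\widehat\varrho^{(p)}]_-\vec X^m(p))\cdot\vec e_1\big)\vec\eta(p)\cdot\vec e_1$. The discrete energy of $\vec X\in\underline V^h$ is $E(\vec X)=2\pi(\vec X\cdot\vec e_1,|\vec X_\rho|)+2\pi\sum_{p\in\partial_1I}\widehat\varrho^{(p)}(\vec X(p)\cdot\vec e_1)(\vec X(p)\cdot\vec e_2)+\pi\sum_{p\in\partial_2I}\widehat\varrho^{(p)}(\vec X(p)\cdot\vec e_1)^2$. *)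

From Stdlib Require Import Reals Lra Lia.
Open Scope R_scope.

(* Boundary types of the endpoints of I = (0,1): partition
   dI = d_D I u d_0 I u d_1 I u d_2 I.  Endpoints are indexed by bool:
   false = rho 0, true = rho 1. *)
Inductive BType := BDir | BZero | BOne | BTwo.
Scheme Equality for BType.

(* nodal representation: a function in V^h is given by its nodal values
   u j = u(q_j), j = 0..J (values beyond J are irrelevant). *)
Definition SF := nat -> R.
Definition VF := nat -> (R * R)%type.

Definition hh (J : nat) : R := / INR J.
Definition node (J : nat) (p : bool) : nat := if p then J else 0%nat.
Definition ppos (p : bool) : R := if p then 1 else 0.

Fixpoint sumR (n : nat) (g : nat -> R) : R :=
  match n with O => 0 | S k => sumR k g + g (S k) end.

Definition dot (u v : R * R) : R := fst u * fst v + snd u * snd v.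
Definition nrm (u : R * R) : R := sqrt (fst u ^ 2 + snd u ^ 2).
Definition vadd (u v : R * R) : R * R := (fst u + fst v, snd u + snd v).
Definition vsub (u v : R * R) : R * R := (fst u - fst v, snd u - snd v).
Definition vscal (c : R) (u : R * R) : R * R := (c * fst u, c * snd u).

Definition Xe1 (X : VF) : SF := fun k => fst (X k).

(* (X_rho) on element j = [q_{j-1}, q_j], j = 1..J (piecewise constant). *)
Definition drho (J : nat) (X : VF) (j : nat) : R * R :=
  ((fst (X j) - fst (X (j - 1)%nat)) / hh J,
   (snd (X j) - snd (X (j - 1)%nat)) / hh J).

(* nu = - [X_rho]^perp / |X_rho|, with (a,b)^perp = (b,-a), on element j *)
Definition nu (J : nat) (X : VF) (j : nat) : R * R :=
  let a := fst (drho J X j) in let b := snd (drho J X j) in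
  (- b / nrm (drho J X j), a / nrm (drho J X j)).

(* mass-lumped product (f,g)^h = h/2 sum_j [(fg)(q_j^-) + (fg)(q_{j-1}^+)],
   where F j k is the value of the (piecewise continuous) product fg
   on element j evaluated at node k (k = j or k = j-1). *)
Definition lumped (J : nat) (F : nat -> nat -> R) : R :=
  hh J / 2 * sumR J (fun j => F j j + F j (j - 1)%nat).

(* exact L^2(I) product (u, c) of a piecewise linear u (nodal values) and a
   piecewise constant c (c j = value on element j):
   int_{q_{j-1}}^{q_j} u c = h * (u(q_{j-1}) + u(q_j))/2 * c j. *)
Definition l2_pl_pc (J : nat) (u : SF) (c : nat -> R) : R :=
  sumR J (fun j => hh J * ((u (j - 1)%nat + u j) / 2) * c j).

(* evaluation of the continuous piecewise linear function with nodal values u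
   at rho in [0,1], via hat functions *)
Definition hat (J j : nat) (rho : R) : R :=
  Rmax 0 (1 - Rabs (rho - INR j * hh J) / hh J).
Definition evalS (J : nat) (u : SF) (rho : R) : R :=
  u 0%nat * hat J 0 rho + sumR J (fun j => u j * hat J j rho).

Definition in_bdry (per : bool) (bc : bool -> BType) (t : BType) (p : bool) : Prop :=
  per = false /\ bc p = t.
Definition bsum (per : bool) (bc : bool -> BType) (t : BType) (g : bool -> R) : R :=
  if per then 0 else
    (if BType_beq (bc false) t then g false else 0) +
    (if BType_beq (bc true) t then g true else 0).

(* V^h: periodicity identification q_0 = q_J in the periodic case *)
Definition inVhS (per : bool) (J : nat) (u : SF) : Prop := per = true -> u J = u 0%nat.
Definition inVh (per : bool) (J : nat) (X : VF) : Prop := per = true -> X J = X 0%nat.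

Definition Vh_d0 (per : bool) (bc : bool -> BType) (J : nat) (X : VF) : Prop :=
  inVh per J X /\ forall p, in_bdry per bc BZero p -> fst (X (node J p)) = 0.

Definition Vh_d (per : bool) (bc : bool -> BType) (J : nat) (X : VF) : Prop :=
  Vh_d0 per bc J X /\
  (forall p, in_bdry per bc BOne p -> fst (X (node J p)) = 0) /\
  (forall p, in_bdry per bc BTwo p -> snd (X (node J p)) = 0) /\
  (forall p, in_bdry per bc BDir p -> X (node J p) = (0, 0)).

Definition Wh_d0 (per : bool) (bc : bool -> BType) (J : nat) (u : SF) : Prop :=
  inVhS per J u /\ forall p, in_bdry per bc BZero p -> u (node J p) = 0.

(* Assumption (A): |X_rho| > 0 a.e. (i.e. on every element, X_rho being
   piecewise constant), and X . e1 > 0 on closure(I) \ d_0 I. *)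
Definition assumptionA (per : bool) (bc : bool -> BType) (J : nat) (X : VF) : Prop :=
  (forall j, (1 <= j <= J)%nat -> nrm (drho J X j) > 0) /\
  (forall rho, 0 <= rho <= 1 ->
     ~ (exists p, in_bdry per bc BZero p /\ rho = ppos p) ->
     evalS J (Xe1 X) rho > 0).

Definition rplus (r : R) : R := Rmax r 0.
Definition rminus (r : R) : R := - Rmax (- r) 0.

Definition Bm (per : bool) (bc : bool -> BType) (rh : bool -> R) (J : nat)
  (Xm Xm1 eta : VF) : R :=
  - bsum per bc BOne (fun p => rh p * fst (Xm (node J p)) * snd (eta (node J p)))
  - bsum per bc BTwo (fun p =>
      (rplus (rh p) * fst (Xm1 (node J p)) + rminus (rh p) * fst (Xm (node J p)))
      * fst (eta (node J p))).

Definition Energy (per : bool) (bc : bool -> BType) (rh : bool -> R) (J : nat)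
  (X : VF) : R :=
  2 * PI * l2_pl_pc J (Xe1 X) (fun j => nrm (drho J X j))
  + 2 * PI * bsum per bc BOne (fun p => rh p * fst (X (node J p)) * snd (X (node J p)))
  + PI * bsum per bc BTwo (fun p => rh p * fst (X (node J p)) ^ 2).

(* Test the first equation with chi = kappa and the second with eta = delta X.
   Their combination gives
     2 pi dt (X.e1 f(kappa), kappa |X_rho|)^h = 2 pi (B(delta X) - (delta X.e1, |X'_rho|)
                                                 - (X.e1 X'_rho, delta X_rho / |X_rho|)),
   and the right-hand side bounds E(X') - E(X) from above: convexity of the norm,
   |a| - |b| <= a.(a - b)/|b|, weighted by X.e1 >= 0, handles the length term, and
   the splitting rho = [rho]_+ + [rho]_- makes the boundary terms dissipative.
   The left-hand side is nonnegative because f is increasing with f(0) = 0. *)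

From Stdlib Require Import Reals Lra Lia Classical.
Open Scope R_scope.

Lemma sumR_ext n f g :
  (forall j, (1 <= j <= n)%nat -> f j = g j) -> sumR n f = sumR n g.
Proof.
induction n as [|n IH]; simpl; intros H; [reflexivity|].
rewrite IH by (intros; apply H; lia). rewrite H by lia. reflexivity.
Qed.

Lemma sumR_add n f g : sumR n (fun j => f j + g j) = sumR n f + sumR n g.
Proof. induction n as [|n IH]; simpl; [lra|]. rewrite IH. lra. Qed.

Lemma sumR_sub n f g : sumR n (fun j => f j - g j) = sumR n f - sumR n g.
Proof. induction n as [|n IH]; simpl; [lra|]. rewrite IH. lra. Qed.

Lemma sumR_scal n c f : sumR n (fun j => c * f j) = c * sumR n f.
Proof. induction n as [|n IH]; simpl; [lra|]. rewrite IH. lra. Qed.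

Lemma sumR_le n f g :
  (forall j, (1 <= j <= n)%nat -> f j <= g j) -> sumR n f <= sumR n g.
Proof.
induction n as [|n IH]; simpl; intros H; [lra|].
assert (sumR n f <= sumR n g) by (apply IH; intros; apply H; lia).
assert (f (S n) <= g (S n)) by (apply H; lia). lra.
Qed.

Lemma sumR_nonneg n g : (forall j, (1 <= j <= n)%nat -> 0 <= g j) -> 0 <= sumR n g.
Proof.
intros H. replace 0 with (sumR n (fun _ => 0)).
- now apply sumR_le.
- induction n as [|n IH]; simpl; [reflexivity|]. rewrite IH by (intros; apply H; lia). lra.
Qed.

Definition kron (j k : nat) : R := if Nat.eqb j k then 1 else 0.

Lemma sumR_kron_out u n k : k = 0%nat \/ (n < k)%nat ->
  sumR n (fun j => u j * kron j k) = 0.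
Proof.
induction n as [|n IH]; simpl; intros Hk; [reflexivity|].
rewrite IH by lia. unfold kron. destruct (Nat.eqb_spec (S n) k); [lia|ring].
Qed.

Lemma sumR_kron u n k : (1 <= k <= n)%nat -> sumR n (fun j => u j * kron j k) = u k.
Proof.
induction n as [|n IH]; simpl; intros Hk; [lia|].
unfold kron at 2. destruct (Nat.eqb_spec (S n) k) as [<-|Hne].
- rewrite sumR_kron_out by lia. ring.
- rewrite IH by lia. ring.
Qed.

Lemma hh_pos J : (0 < J)%nat -> 0 < hh J.
Proof. intros HJ. apply Rinv_0_lt_compat, lt_0_INR. exact HJ. Qed.

Lemma hat_at_node J j k : (0 < J)%nat -> hat J j (INR k * hh J) = kron j k.
Proof.
intros HJ. unfold hat, kron.
assert (Hh := hh_pos J HJ).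
replace (Rabs (INR k * hh J - INR j * hh J) / hh J) with (Rabs (INR k - INR j)).
2:{ replace (INR k * hh J - INR j * hh J) with ((INR k - INR j) * hh J) by ring.
    rewrite Rabs_mult, (Rabs_right (hh J)) by lra. field. lra. }
destruct (Nat.eqb_spec j k) as [->|Hne].
- rewrite Rminus_diag, Rabs_R0, Rmax_right; lra.
- apply Rmax_left.
  assert (INR k + 1 <= INR j \/ INR j + 1 <= INR k) as Hsep.
  { rewrite <- !S_INR. destruct (Nat.lt_total j k) as [Hl|[Hl|Hl]];
    [right|contradiction|left]; apply le_INR; lia. }
  unfold Rabs; destruct (Rcase_abs _); lra.
Qed.

Lemma evalS_at_node J u k : (0 < J)%nat -> (k <= J)%nat -> evalS J u (INR k * hh J) = u k.
Proof.
intros HJ Hk. unfold evalS.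
rewrite (sumR_ext _ _ (fun j => u j * kron j k))
  by (intros; rewrite hat_at_node by lia; reflexivity).
rewrite hat_at_node by lia. unfold kron at 1.
destruct k as [|k]; simpl.
- rewrite sumR_kron_out by lia. ring.
- rewrite sumR_kron by lia. ring.
Qed.

Lemma node_of_ppos J k p :
  (0 < J)%nat -> INR k * hh J = ppos p -> k = node J p.
Proof.
intros HJ Hk. apply INR_eq.
assert (0 < INR J) by (apply lt_0_INR; lia).
unfold hh in Hk. apply (Rmult_eq_reg_r (/ INR J)); [|apply Rinv_neq_0_compat; lra].
rewrite Hk. destruct p; simpl; [rewrite Rinv_r|]; lra.
Qed.

Lemma assumptionA_Xe1_nonneg per bc J X :
  (0 < J)%nat -> Vh_d0 per bc J X -> assumptionA per bc J X ->
  forall k, (k <= J)%nat -> 0 <= fst (X k).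
Proof.
intros HJ [_ Hzero] [_ Hpos] k Hk.
assert (HJR : 0 < INR J) by (apply lt_0_INR; lia).
destruct (classic (exists p, in_bdry per bc BZero p /\ INR k * hh J = ppos p))
  as [[p [Hp Hr]]|Hint].
- rewrite (node_of_ppos J k p), Hzero by assumption. lra.
- assert (Hrange : 0 <= INR k * hh J <= 1).
  { unfold hh. split.
    + apply Rmult_le_pos; [apply pos_INR|left; apply Rinv_0_lt_compat; lra].
    + rewrite <- (Rinv_r (INR J)) by lra.
      apply Rmult_le_compat_r; [left; apply Rinv_0_lt_compat; lra|apply le_INR; lia]. }
  specialize (Hpos _ Hrange Hint). rewrite evalS_at_node in Hpos by assumption.
  unfold Xe1 in Hpos. lra.
Qed.

Lemma monotone_mul_self_nonneg (f : R -> R) x :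
  (forall x y, x <= y -> f x <= f y) -> f 0 = 0 -> 0 <= f x * x.
Proof.
intros Hf Hf0. destruct (Rle_dec 0 x) as [Hx|Hx].
- assert (f 0 <= f x) by (apply Hf; lra). nra.
- assert (f x <= f 0) by (apply Hf; lra). nra.
Qed.

Lemma dot_le_nrm_mul a b : dot a b <= nrm a * nrm b.
Proof.
destruct a as [a1 a2], b as [b1 b2]. unfold dot, nrm; cbn [fst snd].
rewrite <- sqrt_mult by nra.
apply Rle_trans with (Rabs (a1 * b1 + a2 * b2)); [apply Rle_abs|].
rewrite <- sqrt_Rsqr_abs. apply sqrt_le_1_alt. unfold Rsqr.
assert (0 <= (a1 * b2 - a2 * b1) ^ 2) by apply pow2_ge_0. nra.
Qed.

Lemma dot_self a : dot a a = nrm a * nrm a.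
Proof.
unfold dot, nrm. rewrite sqrt_sqrt by nra. ring.
Qed.

(* Convexity of the norm: its linearisation at b bounds the increment. *)
Lemma nrm_sub_le_dot a b :
  0 < nrm b -> nrm a - nrm b <= dot a (vsub a b) / nrm b.
Proof.
intros Hb.
assert (Hdot : dot a (vsub a b) = dot a a - dot a b).
{ unfold dot, vsub. simpl. ring. }
assert (Hcs := dot_le_nrm_mul a b). rewrite dot_self in Hdot.
apply (Rmult_le_reg_r (nrm b)); [exact Hb|].
unfold Rdiv. rewrite Rmult_assoc, Rinv_l, Hdot by lra.
assert (0 <= (nrm a - nrm b) ^ 2) by apply pow2_ge_0. nra.
Qed.

Lemma rplus_add_rminus r : rplus r + rminus r = r.
Proof.
unfold rplus, rminus, Rmax.
destruct (Rle_dec r 0), (Rle_dec (- r) 0); lra.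
Qed.

(* The semi-implicit treatment of the d_2 boundary term: [r]_+ implicit,
   [r]_- explicit, which leaves -([r]_+ - [r]_-) d^2 <= 0. *)
Lemma split_quadratic_le r x d :
  r * (x + d) ^ 2 - 2 * ((rplus r * (x + d) + rminus r * x) * d) <= r * x ^ 2.
Proof.
assert (Hp : 0 <= rplus r) by (unfold rplus, Rmax; destruct (Rle_dec r 0); lra).
assert (Hm : rminus r <= 0) by (unfold rminus, Rmax; destruct (Rle_dec (- r) 0); lra).
assert (Hr := rplus_add_rminus r).
set (p := rplus r) in *. set (m := rminus r) in *.
assert (0 <= p * d ^ 2) by (apply Rmult_le_pos; [lra|apply pow2_ge_0]).
assert (m * d ^ 2 <= 0) by (assert (0 <= d ^ 2) by apply pow2_ge_0; nra).
rewrite <- Hr. nra.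
Qed.

Lemma BType_beq_eq a b : BType_beq a b = true -> a = b.
Proof. destruct a, b; simpl; congruence. Qed.

Lemma bsum_sub per bc t g1 g2 :
  bsum per bc t (fun p => g1 p - g2 p) = bsum per bc t g1 - bsum per bc t g2.
Proof.
unfold bsum. destruct per; [ring|].
destruct (BType_beq (bc false) t), (BType_beq (bc true) t); ring.
Qed.

Lemma bsum_scal per bc t c g :
  bsum per bc t (fun p => c * g p) = c * bsum per bc t g.
Proof.
unfold bsum. destruct per; [ring|].
destruct (BType_beq (bc false) t), (BType_beq (bc true) t); ring.
Qed.

Lemma bsum_le per bc t g1 g2 :
  (forall p, in_bdry per bc t p -> g1 p <= g2 p) ->
  bsum per bc t g1 <= bsum per bc t g2.
Proof.
intros H. unfold bsum. destruct per; [lra|].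
assert (Hp : forall p, BType_beq (bc p) t = true -> g1 p <= g2 p)
  by (intros p Hb; apply H; split; [reflexivity|now apply BType_beq_eq]).
destruct (BType_beq (bc false) t) eqn:E0, (BType_beq (bc true) t) eqn:E1;
  try apply Hp in E0; try apply Hp in E1; lra.
Qed.

Lemma bsum_ext per bc t g1 g2 :
  (forall p, in_bdry per bc t p -> g1 p = g2 p) ->
  bsum per bc t g1 = bsum per bc t g2.
Proof.
intros H. apply Rle_antisym; apply bsum_le; intros p Hp; rewrite (H p Hp); lra.
Qed.

Lemma lumped_ext J F G : (forall j k, F j k = G j k) -> lumped J F = lumped J G.
Proof.
intros H. unfold lumped. f_equal. apply sumR_ext. intros. rewrite !H. reflexivity.
Qed.

Lemma lumped_scal J c F : lumped J (fun j k => c * F j k) = c * lumped J F.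
Proof.
unfold lumped.
rewrite (sumR_ext _ _ (fun j => c * (F j j + F j (j - 1)%nat))) by (intros; ring).
rewrite sumR_scal. ring.
Qed.

Lemma lumped_nonneg J F : (0 < J)%nat ->
  (forall j k, (1 <= j <= J)%nat -> (k <= J)%nat -> 0 <= F j k) -> 0 <= lumped J F.
Proof.
intros HJ H. unfold lumped. apply Rmult_le_pos.
- assert (Hh := hh_pos J HJ). lra.
- apply sumR_nonneg. intros j Hj.
  assert (0 <= F j j) by (apply H; lia).
  assert (0 <= F j (j - 1)%nat) by (apply H; lia). lra.
Qed.

Section FirstVariation.

Variables (per : bool) (bc : bool -> BType) (rh : bool -> R) (J : nat) (Xm dX : VF).
Hypothesis Xm_e1_nonneg : forall k, (k <= J)%nat -> 0 <= fst (Xm k).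
Hypothesis Xm_rho_pos : forall j, (1 <= j <= J)%nat -> nrm (drho J Xm j) > 0.
Hypothesis dX_in_Vh : Vh_d per bc J dX.

Let Xm1 : VF := fun k => vadd (Xm k) (dX k).

Lemma weighted_length_increment_le :
  l2_pl_pc J (Xe1 Xm1) (fun j => nrm (drho J Xm1 j))
    - l2_pl_pc J (Xe1 Xm) (fun j => nrm (drho J Xm j))
  <= l2_pl_pc J (Xe1 dX) (fun j => nrm (drho J Xm1 j))
    + l2_pl_pc J (Xe1 Xm) (fun j => dot (drho J Xm1 j) (drho J dX j) / nrm (drho J Xm j)).
Proof.
unfold l2_pl_pc. rewrite <- sumR_add, <- sumR_sub. apply sumR_le. intros j Hj.
assert (Hd : drho J dX j = vsub (drho J Xm1 j) (drho J Xm j)).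
{ unfold drho, vsub, Xm1, vadd. simpl. f_equal; unfold Rdiv; ring. }
assert (Hconv := nrm_sub_le_dot (drho J Xm1 j) (drho J Xm j) (Xm_rho_pos j Hj)).
set (w := hh J * ((Xe1 Xm (j - 1)%nat + Xe1 Xm j) / 2)).
assert (Hw : 0 <= w).
{ assert (0 <= Xe1 Xm (j - 1)%nat) by (apply Xm_e1_nonneg; lia).
  assert (0 <= Xe1 Xm j) by (apply Xm_e1_nonneg; lia).
  apply Rmult_le_pos; [left; apply hh_pos; lia|lra]. }
assert (Hweighted := Rmult_le_compat_l w _ _ Hw Hconv).
assert (Hfst : forall k, Xe1 Xm1 k = Xe1 Xm k + Xe1 dX k) by reflexivity.
rewrite Hd, !Hfst. unfold w in *. lra.
Qed.

Lemma boundary_one_increment :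
  bsum per bc BOne (fun p => rh p * fst (Xm1 (node J p)) * snd (Xm1 (node J p)))
  - bsum per bc BOne (fun p => rh p * fst (Xm (node J p)) * snd (Xm (node J p)))
  = bsum per bc BOne (fun p => rh p * fst (Xm (node J p)) * snd (dX (node J p))).
Proof.
rewrite <- bsum_sub. apply bsum_ext. intros p Hp.
destruct dX_in_Vh as [_ [HOne _]].
unfold Xm1, vadd. simpl. rewrite (HOne p Hp). ring.
Qed.

Lemma boundary_two_increment_le :
  bsum per bc BTwo (fun p => rh p * fst (Xm1 (node J p)) ^ 2)
  - bsum per bc BTwo (fun p => rh p * fst (Xm (node J p)) ^ 2)
  <= 2 * bsum per bc BTwo (fun p =>
        (rplus (rh p) * fst (Xm1 (node J p)) + rminus (rh p) * fst (Xm (node J p)))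
        * fst (dX (node J p))).
Proof.
rewrite <- bsum_sub, <- bsum_scal. apply bsum_le. intros p _.
unfold Xm1, vadd. simpl.
assert (H := split_quadratic_le (rh p) (fst (Xm (node J p))) (fst (dX (node J p)))).
lra.
Qed.

Lemma Energy_increment_le :
  Energy per bc rh J Xm1 - Energy per bc rh J Xm
  <= 2 * PI * (l2_pl_pc J (Xe1 dX) (fun j => nrm (drho J Xm1 j))
     + l2_pl_pc J (Xe1 Xm) (fun j => dot (drho J Xm1 j) (drho J dX j) / nrm (drho J Xm j))
     - Bm per bc rh J Xm Xm1 dX).
Proof.
assert (Hlen := weighted_length_increment_le).
assert (Hone := boundary_one_increment).
assert (Htwo := boundary_two_increment_le).
assert (HPI := PI_RGT_0).
unfold Energy, Bm. nra.
Qed.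

End FirstVariation.

Theorem mainTheorem10
  (per : bool) (bc : bool -> BType) (rh : bool -> R) (J : nat)
  (f : R -> R) (Xm dX : VF) (kappa : SF) (dt : R) :
  (3 <= J)%nat ->
  (forall p, Rabs (rh p) <= 1) ->
  (forall x y, x <= y -> f x <= f y) -> f 0 = 0 ->
  Vh_d0 per bc J Xm -> assumptionA per bc J Xm ->
  0 < dt ->
  Vh_d per bc J dX -> Wh_d0 per bc J kappa ->
  let Xm1 : VF := fun k => vadd (Xm k) (dX k) in
  (forall chi, Wh_d0 per bc J chi ->
     lumped J (fun j k =>
       fst (Xm k) * dot (vscal (/ dt) (vsub (Xm1 k) (Xm k))) (vscal (chi k) (nu J Xm j))
       * nrm (drho J Xm j))
     = lumped J (fun j k =>
       fst (Xm k) * f (kappa k) * chi k * nrm (drho J Xm j))) ->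
  (forall eta, Vh_d per bc J eta ->
     lumped J (fun j k =>
       fst (Xm k) * kappa k * dot (nu J Xm j) (eta k) * nrm (drho J Xm j))
     + l2_pl_pc J (Xe1 eta) (fun j => nrm (drho J Xm1 j))
     + l2_pl_pc J (Xe1 Xm) (fun j => dot (drho J Xm1 j) (drho J eta j) / nrm (drho J Xm j))
     = Bm per bc rh J Xm Xm1 eta) ->
  Energy per bc rh J Xm1
    + 2 * PI * dt * lumped J (fun j k =>
        fst (Xm k) * f (kappa k) * kappa k * nrm (drho J Xm j))
    <= Energy per bc rh J Xm
  /\ Energy per bc rh J Xm1 <= Energy per bc rh J Xm.
Proof.
intros HJ _ Hf Hf0 HXm HA Hdt HdX Hkappa Xm1 Hmotion Hcurv.
assert (Hnonneg := assumptionA_Xe1_nonneg per bc J Xm ltac:(lia) HXm HA).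
set (D := lumped J (fun j k => fst (Xm k) * f (kappa k) * kappa k * nrm (drho J Xm j))).
assert (HD : 0 <= D).
{ apply lumped_nonneg; [lia|]. intros j k _ Hk.
  replace (fst (Xm k) * f (kappa k) * kappa k * nrm (drho J Xm j))
    with (fst (Xm k) * (f (kappa k) * kappa k) * nrm (drho J Xm j)) by ring.
  apply Rmult_le_pos; [apply Rmult_le_pos|apply sqrt_pos].
  - apply Hnonneg, Hk.
  - apply monotone_mul_self_nonneg; assumption. }
assert (Htest : lumped J (fun j k =>
          fst (Xm k) * kappa k * dot (nu J Xm j) (dX k) * nrm (drho J Xm j)) = dt * D).
{ specialize (Hmotion kappa Hkappa).
  rewrite (lumped_ext _ _ (fun j k => / dt *
    (fst (Xm k) * kappa k * dot (nu J Xm j) (dX k) * nrm (drho J Xm j)))),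
    lumped_scal in Hmotion.
  - fold D in Hmotion. rewrite <- Hmotion. field. lra.
  - intros j k. unfold Xm1, vadd, vsub, vscal, dot. simpl. ring. }
assert (Hstep := Energy_increment_le per bc rh J Xm dX Hnonneg (proj1 HA) HdX).
specialize (Hcurv dX HdX). fold Xm1 in Hstep.
assert (0 <= 2 * PI * dt * D) by (assert (HPI := PI_RGT_0); apply Rmult_le_pos; nra).
split; nra.
Qed.
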